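(* Let $\mathfrak{B}$ be a finite cyclic group, of order at least $3$, of invertible diagonal $2\times2$ complex matrices, containing three pairwise linearly independent matrices. Let $n\ge3$ and let $F$ be a Boolean function of arity $2n$ such that every function of arity less than $2n$ realizable by a gadget of $\#(\{F\}\cup\mathfrak{B})$ lies in $\lambda\langle\mathfrak{B}\rangle$. Then either $F$ is the zero function, or there exist four distinct variables $x,y,z,w$ of $F$ such that $F^{xyzw}_{0000}$ is a nonzero function.
   Context: Matrices in $\mathfrak{B}$ are binary functions $M(u,v)=M_{uv}$. $\#\mathcal{G}$: input a finite multigraph whose vertices carry functions from $\mathcal{G}$ of arity equal to the degree (edges act as binary equality); output the sum over $\{0,1\}$-edge assignments of the product of vertex functions. Gadgets are such networks with dangling edges; realizable functions are their functions. $\langle\mathfrak{B}\rangle$ is the set of functions $x\mapsto\prod_{j=1}^m M_j(x_{\pi(2j-1)},x_{\pi(2j)})$ with $\pi$ a permutation of the $2m$ variables and $M_j\in\mathfrak{B}$; $\lambda\langle\mathfrak{B}\rangle=\{\lambda f:\lambda\in\mathbb{C},f\in\langle\mathfrak{B}\rangle\}$. $F^{xyzw}_{0000}$ is the arity-$(2n-4)$ function obtained from $F$ by fixing $x=y=z=w=0$. *)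

(* Complex numbers are modelled as R[i] = complex R for
   R : realType (any realType is the field of real numbers). *)
From HB Require Import structures.
From mathcomp Require Import all_boot all_order all_algebra all_fingroup.
From mathcomp Require Import complex.
From mathcomp Require Import reals.
Set Implicit Arguments.
Unset Strict Implicit.
Unset Printing Implicit Defensive.
Import Order.TTheory GRing.Theory Num.Theory.
Local Open Scope ring_scope.

Section Holant.
Variable C : fieldType.

Definition sig (k : nat) := {ffun 'I_k -> bool} -> C.

Definition bo (b : bool) : 'I_2 := @inord 1 b.

Definition mxfun (M : 'M[C]_2) (u v : bool) : C := M (bo u) (bo v).

Lemma ordl_proof m (j : 'I_m) : (j.*2 < m.*2)%N.
Proof. by rewrite ltn_double. Qed.
Lemma ordr_proof m (j : 'I_m) : (j.*2.+1 < m.*2)%N.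
Proof. by rewrite -doubleS leq_double. Qed.
(* the variables with (1-based) indices 2j-1 and 2j, for 0-based j *)
Definition ordl m (j : 'I_m) : 'I_(m.*2) := Ordinal (ordl_proof j).
Definition ordr m (j : 'I_m) : 'I_(m.*2) := Ordinal (ordr_proof j).

(* f in <B>: f(x) = prod_{j=1}^m M_j(x_{pi(2j-1)}, x_{pi(2j)}),
   pi a permutation (bijection) of the 2m variables, M_j in B. *)
Definition inBrack (B : seq 'M[C]_2) (k : nat) (f : sig k) : Prop :=
  exists m : nat, exists pi : 'I_(m.*2) -> 'I_k, exists Ms : 'I_m -> 'M[C]_2,
    k = m.*2 /\ bijective pi /\ (forall j, Ms j \in B) /\
    forall x : {ffun 'I_k -> bool},
      f x = \prod_(j < m) mxfun (Ms j) (x (pi (ordl j))) (x (pi (ordr j))).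

Definition inLamBrack (B : seq 'M[C]_2) (k : nat) (g : sig k) : Prop :=
  exists lam : C, exists f : sig k,
    inBrack B f /\ forall x, g x = lam * f x.

Section Gadget.
Variables (N : nat) (F : sig N) (B : seq 'M[C]_2).
Variables (nv : nat) (kind : 'I_nv -> option 'M[C]_2).
(* kind v = None : vertex labelled F (degree N);
   kind v = Some M : vertex labelled by the matrix M (degree 2). *)

Definition deg (v : 'I_nv) : nat :=
  match kind v with Some _ => 2 | None => N end.

(* half-edges: pairs (v, i) with i < deg v *)
Definition HE := {v : 'I_nv & 'I_(deg v)}.

Definition vfun (v : 'I_nv) : sig (deg v) :=
  match kind v as o
    return sig (match o with Some _ => 2 | None => N end) with
  | Some M => fun y => mxfun M (y ord0) (y ord_max)
  | None => F
  end.

Variables (k : nat) (mate : HE -> HE) (ext : 'I_k -> HE).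
(* ext j : the half-edge of the j-th dangling edge;
   mate : pairs the remaining half-edges into (internal) edges. *)

Definition gadget_wf : Prop :=
  (forall v M, kind v = Some M -> M \in B) /\
  injective ext /\
  (forall h : HE, h \notin codom ext ->
     [/\ mate h != h, mate (mate h) = h & mate h \notin codom ext]).

(* sum over {0,1}-assignments to the edges (an assignment to half-edges
   constant on each internal edge, and equal to x on dangling edges) of the
   product of the vertex functions *)
Definition gadget_val (x : {ffun 'I_k -> bool}) : C :=
  \sum_(s : {ffun HE -> bool} |
        [forall h, (h \notin codom ext) ==> (s (mate h) == s h)] &&
        [forall j, s (ext j) == x j])
    \prod_(v < nv) @vfun v [ffun i => s (@Tagged _ v (fun w => 'I_(deg w)) i)].

End Gadget.

Definition realizable N (F : sig N) (B : seq 'M[C]_2) (k : nat) (g : sig k)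
  : Prop :=
  exists nv (kind : 'I_nv -> option 'M[C]_2)
         (mate : HE N kind -> HE N kind) (ext : 'I_k -> HE N kind),
    gadget_wf B mate ext /\ forall x, g x = gadget_val F mate ext x.

Definition lin_indep2 (A A' : 'M[C]_2) : Prop :=
  forall a b : C, a *: A + b *: A' = 0 -> a = 0 /\ b = 0.

(* B (as a duplicate-free list) is a finite cyclic group of invertible
   diagonal 2x2 matrices: B = { g^i : i in nat } for a generator g. *)
Definition finite_cyclic_diag_group (B : seq 'M[C]_2) : Prop :=
  uniq B /\
  (forall M, M \in B -> is_diag_mx M /\ M \in unitmx) /\
  exists g : 'M[C]_2, forall M, M \in B <-> exists i : nat, M = g ^+ i.

End Holant.

From HB Require Import structures.
From mathcomp Require Import all_boot all_order all_algebra all_fingroup.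
From mathcomp Require Import complex.
From mathcomp Require Import reals.
From mathcomp Require Import ring.
From Stdlib Require Import Classical.
Set Implicit Arguments. Unset Strict Implicit. Unset Printing Implicit Defensive.
Import Order.TTheory GRing.Theory Num.Theory.
Local Open Scope ring_scope.

(* Suppose F vanishes on every input with four zeros.  Joining two variables
   i, j of F through a matrix M of B gives a gadget of arity 2n - 2 computing
   M00 F(x, i = 0, j = 0) + M11 F(x, i = 1, j = 1).  It vanishes at the all-zero
   input, whereas every member of <B> is a product of nonzero diagonal entries
   there; so the scalar in lambda<B> is 0 and the gadget vanishes identically.
   For two linearly independent diagonal M this 2x2 system forces F to vanish
   whenever two variables agree, and among any three variables two agree. *)

Section DiagonalMatrices.
Variable C : fieldType.
Implicit Types (M : 'M[C]_2) (b c : bool).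

Lemma bo_surj (r : 'I_2) : exists b, r = bo b.
Proof. by exists (r != ord0); apply: val_inj; rewrite /= inordK; case: r => -[|[|]]. Qed.

Lemma diag_unitmx_neq0 n (A : 'M[C]_n) i : is_diag_mx A -> A \in unitmx -> A i i != 0.
Proof.
move=> /is_diag_mx_is_trig/det_trig detA; rewrite unitmxE unitfE detA.
by move/prodf_neq0; apply.
Qed.

Lemma mxfun_diag_neq0 M b : is_diag_mx M -> M \in unitmx -> mxfun M b b != 0.
Proof. exact: diag_unitmx_neq0. Qed.

Lemma mxfun_diag_offdiag M b c : is_diag_mx M -> b != c -> mxfun M b c = 0.
Proof.
by move/is_diag_mxP=> dM bc; apply: dM; rewrite /bo !inordK //; case: b c bc => -[].
Qed.

Lemma sum_mxfun_diag M (f : bool -> bool -> C) : is_diag_mx M ->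
  \sum_c \sum_d mxfun M c d * f c d =
  mxfun M false false * f false false + mxfun M true true * f true true.
Proof.
move=> dM; rewrite !big_bool /= !(@mxfun_diag_offdiag M true false) //.
by rewrite !(@mxfun_diag_offdiag M false true) // !mul0r addr0 add0r addrC.
Qed.

Lemma diag_lin_indep2_det M1 M2 :
  is_diag_mx M1 -> is_diag_mx M2 -> M1 \in unitmx -> lin_indep2 M1 M2 ->
  mxfun M1 false false * mxfun M2 true true -
  mxfun M2 false false * mxfun M1 true true != 0.
Proof.
move=> d1 d2 u1 indep; apply/eqP => det0.
have /indep[_ /eqP] : mxfun M2 false false *: M1 + (- mxfun M1 false false) *: M2 = 0.
  apply/matrixP => r s; have [[b ->] [c ->]] := (bo_surj r, bo_surj s).
  rewrite !mxE -/(mxfun M1 b c) -/(mxfun M2 b c).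
  have [->|bc] := eqVneq b c; last first.
    by rewrite (mxfun_diag_offdiag d1 bc) (mxfun_diag_offdiag d2 bc) !mulr0 addr0.
  by case: c; [rewrite -[RHS]oppr0 -det0 | ]; ring.
by rewrite oppr_eq0 (negbTE (mxfun_diag_neq0 false d1 u1)).
Qed.

End DiagonalMatrices.

Lemma cramer2_eq0 (C : fieldType) (p1 q1 p2 q2 x y : C) :
  p1 * q2 - p2 * q1 != 0 -> p1 * x + q1 * y = 0 -> p2 * x + q2 * y = 0 ->
  x = 0 /\ y = 0.
Proof.
move=> det e1 e2.
have ex : x * (p1 * q2 - p2 * q1) = q2 * (p1 * x + q1 * y) - q1 * (p2 * x + q2 * y).
  by ring.
have ey : y * (p1 * q2 - p2 * q1) = p1 * (p2 * x + q2 * y) - p2 * (p1 * x + q1 * y).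
  by ring.
rewrite e1 e2 !mulr0 subrr in ex ey.
by split; apply/eqP; rewrite -(mulIr_eq0 _ (mulIf det)) ?ex ?ey.
Qed.

Section Brackets.
Variables (C : fieldType) (B : seq 'M[C]_2).
Hypothesis diag_unit_B : forall M, M \in B -> is_diag_mx M /\ M \in unitmx.

Lemma inBrack_false_neq0 k (f : sig C k) : inBrack B f -> f [ffun => false] != 0.
Proof.
move=> [m [pi [Ms [_ [_ [MsB ->]]]]]]; apply/prodf_neq0 => t _; rewrite !ffunE.
by have [dM uM] := diag_unit_B (MsB t); apply: mxfun_diag_neq0.
Qed.

Lemma inLamBrack_eq0 k (g : sig C k) :
  inLamBrack B g -> g [ffun => false] = 0 -> forall x, g x = 0.
Proof.
move=> [lam [f [fB eg]]]; rewrite eg => /eqP.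
rewrite mulf_eq0 (negbTE (inBrack_false_neq0 fB)) orbF => /eqP lam0 x.
by rewrite eg lam0 mul0r.
Qed.

End Brackets.

Section SelfLoop.
Variables (C : fieldType) (N : nat) (F : sig C N.+2) (M : 'M[C]_2).
Variables (i : 'I_N.+2) (j' : 'I_N.+1).
Local Notation j := (lift i j').

Definition fuse (x : {ffun 'I_N -> bool}) (c d : bool) : {ffun 'I_N.+2 -> bool} :=
  [ffun u => if unlift i u is Some u' then
               if unlift j' u' is Some t then x t else d
             else c].

Lemma fuse_i x c d : fuse x c d i = c.
Proof. by rewrite ffunE unlift_none. Qed.

Lemma fuse_j x c d : fuse x c d j = d.
Proof. by rewrite ffunE liftK unlift_none. Qed.

Lemma fuse_lift x c d t : fuse x c d (lift i (lift j' t)) = x t.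
Proof. by rewrite ffunE !liftK. Qed.

Lemma fuseE (a : {ffun 'I_N.+2 -> bool}) :
  a = fuse [ffun t => a (lift i (lift j' t))] (a i) (a j).
Proof.
apply/ffunP => u; rewrite ffunE.
by case: unliftP => [u' ->|->] //; case: unliftP => [t ->|->] //; rewrite ffunE.
Qed.

(* Vertex 0 carries F, vertex 1 carries M; the two ends of M are joined to the
   variables i and j of F, and the other N variables of F dangle. *)
Definition loop_kind (v : 'I_2) : option 'M[C]_2 :=
  if val v is 0%N then None else Some M.

Local Notation HEl := (HE N.+2 loop_kind).

Definition he_F (u : 'I_N.+2) : HEl :=
  @Tagged 'I_2 ord0 (fun v => 'I_(deg N.+2 loop_kind v)) u.

Definition he_M (b : 'I_2) : HEl :=
  @Tagged 'I_2 ord_max (fun v => 'I_(deg N.+2 loop_kind v)) b.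

Definition he_split (h : HEl) : 'I_N.+2 + 'I_2 :=
  if val (tag h) is 0%N then inl (inord (tagged h)) else inr (inord (tagged h)).

Definition he_join (s : 'I_N.+2 + 'I_2) : HEl :=
  match s with inl u => he_F u | inr b => he_M b end.

Lemma he_split_F u : he_split (he_F u) = inl u.
Proof. by rewrite /he_split /= inord_val. Qed.

Lemma he_split_M b : he_split (he_M b) = inr b.
Proof. by rewrite /he_split /= inord_val. Qed.

Lemma he_splitK : cancel he_split he_join.
Proof.
case=> v; case: v => -[|[|//]] lt_v2.
- rewrite (_ : Ordinal lt_v2 = ord0) => [u|]; last exact: val_inj.
  by rewrite /= inord_val.
- rewrite (_ : Ordinal lt_v2 = ord_max) => [u|]; last exact: val_inj.
  by rewrite /= inord_val.
Qed.

Lemma he_F_inj : injective he_F.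
Proof. by move=> u v /(congr1 he_split); rewrite !he_split_F => -[]. Qed.

Definition loop_ext (t : 'I_N) : HEl := he_F (lift i (lift j' t)).

Definition loop_mate (h : HEl) : HEl :=
  match he_split h with
  | inl u => if u == i then he_M ord0 else if u == j then he_M ord_max else h
  | inr b => if b == ord0 then he_F i else he_F j
  end.

Variant he_spec : HEl -> Type :=
  | HeExt t : he_spec (loop_ext t)
  | HeI : he_spec (he_F i)
  | HeJ : he_spec (he_F j)
  | HeM0 : he_spec (he_M ord0)
  | HeM1 : he_spec (he_M ord_max).

Lemma heP h : he_spec h.
Proof.
rewrite -[h]he_splitK; case: (he_split h) => [u|[[|[|//]] lt_b2]] /=.
- case: (unliftP i u) => [u' ->|->]; last exact: HeI.
  by case: (unliftP j' u') => [t ->|->]; [exact: HeExt | exact: HeJ].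
- by rewrite (_ : Ordinal lt_b2 = ord0); [exact: HeM0 | apply: val_inj].
- by rewrite (_ : Ordinal lt_b2 = ord_max); [exact: HeM1 | apply: val_inj].
Qed.

Lemma he_F_i_notin : he_F i \notin codom loop_ext.
Proof. by apply/codomP => -[t /he_F_inj/eqP]; rewrite (negbTE (neq_lift _ _)). Qed.

Lemma he_F_j_notin : he_F j \notin codom loop_ext.
Proof.
by apply/codomP => -[t /he_F_inj/lift_inj/eqP]; rewrite (negbTE (neq_lift _ _)).
Qed.

Lemma he_M_notin b : he_M b \notin codom loop_ext.
Proof. by apply/codomP => -[t /(congr1 he_split)]; rewrite he_split_M he_split_F. Qed.

Lemma loop_mate_i : loop_mate (he_F i) = he_M ord0.
Proof. by rewrite /loop_mate he_split_F eqxx. Qed.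

Lemma loop_mate_j : loop_mate (he_F j) = he_M ord_max.
Proof. by rewrite /loop_mate he_split_F eq_sym (negbTE (neq_lift _ _)) eqxx. Qed.

Lemma loop_mate_M0 : loop_mate (he_M ord0) = he_F i.
Proof. by rewrite /loop_mate he_split_M. Qed.

Lemma loop_mate_M1 : loop_mate (he_M ord_max) = he_F j.
Proof. by rewrite /loop_mate he_split_M. Qed.

Lemma loop_gadget_wf B : M \in B -> gadget_wf B loop_mate loop_ext.
Proof.
move=> MB; split; [|split].
- by case=> -[|v] lt_v M' //= [<-].
- by move=> t t' /he_F_inj/lift_inj/lift_inj.
move=> h; case: (heP h) => [t||||] notin_h.
- by rewrite codom_f in notin_h.
- by rewrite loop_mate_i loop_mate_M0 he_M_notin.
- by rewrite loop_mate_j loop_mate_M1 he_M_notin.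
- by rewrite loop_mate_M0 loop_mate_i he_F_i_notin.
- by rewrite loop_mate_M1 loop_mate_j he_F_j_notin.
Qed.

Definition loop_consistent (x : {ffun 'I_N -> bool}) (s : {ffun HEl -> bool}) :=
  [forall h, (h \notin codom loop_ext) ==> (s (loop_mate h) == s h)] &&
  [forall t, s (loop_ext t) == x t].

Definition loop_assign x c d : {ffun HEl -> bool} :=
  [ffun h => match he_split h with
             | inl u => fuse x c d u
             | inr b => if b == ord0 then c else d
             end].

Lemma loop_assign_F x c d u : loop_assign x c d (he_F u) = fuse x c d u.
Proof. by rewrite ffunE he_split_F. Qed.

Lemma loop_assign_M x c d :
  loop_assign x c d (he_M ord0) = c /\ loop_assign x c d (he_M ord_max) = d.
Proof. by rewrite !ffunE !he_split_M. Qed.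

Lemma loop_consistentE x c d s :
  loop_consistent x s && ((s (he_F i), s (he_F j)) == (c, d)) =
  (s == loop_assign x c d).
Proof.
have [sc sd] := loop_assign_M x c d.
apply/idP/eqP => [|->].
  case/andP=> /andP[/forallP s_mate /forallP s_ext] /eqP[si sj].
  have := s_mate (he_F i); rewrite he_F_i_notin loop_mate_i si => /eqP s0.
  have := s_mate (he_F j); rewrite he_F_j_notin loop_mate_j sj => /eqP s1.
  apply/ffunP => h; case: (heP h) => [t||||]; rewrite ?sc ?sd ?loop_assign_F //.
  - by rewrite fuse_lift; apply/eqP.
  - by rewrite fuse_i.
  - by rewrite fuse_j.
rewrite !loop_assign_F fuse_i fuse_j eqxx andbT; apply/andP; split.
  apply/forallP => h; apply/implyP; case: (heP h) => [t||||] notin_h.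
  - by rewrite codom_f in notin_h.
  - by rewrite loop_mate_i sc loop_assign_F fuse_i.
  - by rewrite loop_mate_j sd loop_assign_F fuse_j.
  - by rewrite loop_mate_M0 sc loop_assign_F fuse_i.
  - by rewrite loop_mate_M1 sd loop_assign_F fuse_j.
by apply/forallP => t; rewrite loop_assign_F fuse_lift.
Qed.

Lemma loop_vertices_prod (s : {ffun HEl -> bool}) :
  \prod_(v < 2) @vfun C N.+2 F 2 loop_kind v
      [ffun h => s (Tagged (fun w => 'I_(deg N.+2 loop_kind w)) h)] =
  F [ffun u => s (he_F u)] * mxfun M (s (he_M ord0)) (s (he_M ord_max)).
Proof.
rewrite big_ord_recl big_ord1.
have -> : lift ord0 ord0 = ord_max :> 'I_2 by apply: val_inj.
by rewrite /vfun /= !ffunE.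
Qed.

Lemma loop_gadget_val x :
  gadget_val F loop_mate loop_ext x = \sum_c \sum_d mxfun M c d * F (fuse x c d).
Proof.
pose ends (s : {ffun HEl -> bool}) := (s (he_F i), s (he_F j)).
rewrite /gadget_val (partition_big ends predT) //=.
rewrite pair_big /=; apply: eq_bigr => -[c d] _.
rewrite (eq_bigl (pred1 (loop_assign x c d))) => [|s]; last exact: loop_consistentE.
rewrite big_pred1_eq loop_vertices_prod; have [-> ->] := loop_assign_M x c d.
rewrite mulrC; congr (_ * F _); apply/ffunP => u.
by rewrite ffunE loop_assign_F.
Qed.

Lemma loop_realizable B : M \in B ->
  realizable F B (fun x => \sum_c \sum_d mxfun M c d * F (fuse x c d)).
Proof.
move=> MB; exists 2, loop_kind, loop_mate, loop_ext.
by split; [exact: loop_gadget_wf | move=> x; rewrite loop_gadget_val].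
Qed.

End SelfLoop.

Lemma exists_neq_eq_bool n (a : 'I_n -> bool) : (2 < n)%N ->
  exists i j, i != j /\ a i = a j.
Proof.
move=> n_gt2; pose o k (lt_k3 : (k < 3)%N) := Ordinal (leq_trans lt_k3 n_gt2).
have [e01|n01] := eqVneq (a (o 0 isT)) (a (o 1 isT)).
  by exists (o 0 isT), (o 1 isT).
have [e02|n02] := eqVneq (a (o 0 isT)) (a (o 2 isT)).
  by exists (o 0 isT), (o 2 isT).
exists (o 1 isT), (o 2 isT); split => //.
by move: n01 n02; case: (a _); case: (a _); case: (a _).
Qed.

Section LoopClosure.
Variables (C : fieldType) (B : seq 'M[C]_2) (M1 M2 : 'M[C]_2).
Variables (N : nat) (F : sig C N.+2).
Hypothesis diag_unit_B : forall M, M \in B -> is_diag_mx M /\ M \in unitmx.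
Hypotheses (M1B : M1 \in B) (M2B : M2 \in B) (indep12 : lin_indep2 M1 M2).
Hypothesis N_ge4 : (4 <= N)%N.
Hypothesis realizable_small : forall k (g : sig C k),
  (k < N.+2)%N -> realizable F B g -> inLamBrack B g.
Hypothesis F_four_zeros : forall (a : {ffun 'I_N.+2 -> bool}) (x y z w : 'I_N.+2),
  uniq [:: x; y; z; w] -> a x = false -> a y = false -> a z = false -> a w = false ->
  F a = 0.

Lemma F_fuse_false i j' c d : F (fuse i j' [ffun => false] c d) = 0.
Proof.
pose o k (lt_k4 : (k < 4)%N) := lift i (lift j' (Ordinal (leq_trans lt_k4 N_ge4))).
apply: (F_four_zeros (x := o 0 isT) (y := o 1 isT) (z := o 2 isT) (w := o 3 isT));
  rewrite ?fuse_lift ?ffunE //.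
have o_inj : injective (fun t => lift i (lift j' t)) by move=> t t' /lift_inj/lift_inj.
by rewrite (map_inj_uniq o_inj [:: _; _; _; _]).
Qed.

Lemma loop_vanishes M i j' x : M \in B ->
  mxfun M false false * F (fuse i j' x false false) +
  mxfun M true true * F (fuse i j' x true true) = 0.
Proof.
move=> MB; have [dM _] := diag_unit_B MB.
have /(inLamBrack_eq0 diag_unit_B) g_eq0 :=
  realizable_small (leqnSn N.+1) (loop_realizable F i j' MB).
rewrite -(sum_mxfun_diag (fun c d => F (fuse i j' x c d))) // g_eq0 //.
by apply: big1 => c _; apply: big1 => d _; rewrite F_fuse_false mulr0.
Qed.

Lemma F_eq_vars_eq0 (i j : 'I_N.+2) (a : {ffun 'I_N.+2 -> bool}) :
  i != j -> a i = a j -> F a = 0.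
Proof.
case: (unliftP i j) => [j' ->|->]; last by rewrite eqxx.
move=> _ aij; rewrite (fuseE i j' a) -aij.
set x := [ffun t => _].
have [d1 u1] := diag_unit_B M1B; have [d2 _] := diag_unit_B M2B.
have [F0 F1] := cramer2_eq0 (diag_lin_indep2_det d1 d2 u1 indep12)
  (loop_vanishes i j' x M1B) (loop_vanishes i j' x M2B).
by case: (a i).
Qed.

Lemma F_eq0 (a : {ffun 'I_N.+2 -> bool}) : F a = 0.
Proof.
have N2_gt2 : (2 < N.+2)%N by rewrite !ltnS (leq_trans _ N_ge4).
have [i [j [ij aij]]] := exists_neq_eq_bool a N2_gt2.
exact: F_eq_vars_eq0 ij aij.
Qed.

End LoopClosure.

Local Open Scope complex_scope.
Unset Implicit Arguments.

Theorem mainTheorem14 (R : realType) (B : seq 'M[R[i]]_2) (n : nat)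
    (F : sig R[i] (n.*2)) :
  finite_cyclic_diag_group B ->
  (3 <= size B)%N ->
  (exists M1 M2 M3, [/\ M1 \in B, M2 \in B & M3 \in B] /\
     [/\ lin_indep2 M1 M2, lin_indep2 M1 M3 & lin_indep2 M2 M3]) ->
  (3 <= n)%N ->
  (forall (k : nat) (g : sig R[i] k), (k < n.*2)%N ->
     realizable F B g -> inLamBrack B g) ->
  (forall x, F x = 0) \/
  exists x y z w : 'I_(n.*2),
    [/\ uniq [:: x; y; z; w] &
      exists a : {ffun 'I_(n.*2) -> bool},
        [/\ a x = false, a y = false, a z = false, a w = false & F a != 0]].
Proof.
move=> [_ [diag_unit_B _]] _ [M1 [M2 [_ [[M1B M2B _] [indep12 _ _]]]]] n_ge3.
move=> realizable_small.
apply: NNPP => /not_or_and[+ no_four]; apply.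
have : (6 <= n.*2)%N by rewrite -(leq_double 3) in n_ge3.
move: F realizable_small no_four; case: (n.*2) => [|[|N]] // F realizable_small no_four.
rewrite !ltnS => N_ge4.
apply: (F_eq0 diag_unit_B M1B M2B indep12 N_ge4 realizable_small).
move=> a x y z w uniq_xyzw ax ay az aw; apply/eqP/negPn/negP => Fa.
by apply: no_four; exists x, y, z, w; split => //; exists a.
Qed.
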